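(* Let $D$ be an integral domain, $\mathfrak{m}$ a maximal $w$-ideal of $D$, and $M$ a torsion-free $D$-module which is a $w$-module. Then the following are equivalent: (1) $M$ is an $\mathfrak{m}$-SM-module; (2) $M_{\mathfrak{m}}$ is a Noetherian $D_{\mathfrak{m}}$-module and for every nonzero finitely generated $D$-submodule $L$ of $M$ there exists $s\in D\setminus\mathfrak{m}$ such that $(L_w)_{\mathfrak{m}}\cap M=L_w:s$.
   Context: Let $K$ be the quotient field of $D$; $I_v=(I^{-1})^{-1}$ with $I^{-1}=\{a\in K\mid aI\subseteq D\}$; $\mathrm{GV}(D)$ is the set of finitely generated ideals $J$ with $J_v=D$. For a torsion-free module $N$, $N_w=\{x\in N\otimes K\mid xJ\subseteq N\text{ for some }J\in\mathrm{GV}(D)\}$; $N$ is a $w$-module if $N_w=N$; a $w$-ideal is an ideal that is a $w$-module, and a maximal $w$-ideal is a proper $w$-ideal maximal among proper $w$-ideals. A submodule $N$ of $M$ is $S$-$w$-finite if there exist $s\in S$ and a finitely generated submodule $F$ of $M$ with $Ns\subseteq F_w\subseteq N_w$; a $w$-module $M$ is an $S$-SM-module if every $w$-submodule (submodule $L$ with $L_w=L$) is $S$-$w$-finite. $M$ is an $\mathfrak{m}$-SM-module if it is an $S$-SM-module for $S=D\setminus\mathfrak{m}$. For $r\in D$ and a submodule $L'$, $L':r=\{x\in M\mid xr\in L'\}$. The intersection is taken in $M_{\mathfrak{m}}$ with $M$ identified with its image. *)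

From HB Require Import structures.
From mathcomp Require Import all_boot all_order all_algebra.
Set Implicit Arguments. Unset Strict Implicit. Unset Printing Implicit Defensive.
Import Order.TTheory GRing.Theory Num.Theory.
Local Open Scope ring_scope.

(* D : an integral domain, K = {fraction D} its quotient field.
   A torsion-free D-module M is modelled as a D-submodule of a K-vector space V
   (e.g. V = M (x)_D K); all constructions (N (x) K, N_w, M_m, ...) are then
   computed inside V. *)

Definition tof (D : idomainType) (d : D) : {fraction D} := @FracField.tofrac D d.

Definition is_ideal (D : idomainType) (I : D -> Prop) : Prop :=
  I 0 /\ (forall x y, I x -> I y -> I (x + y)) /\ (forall r x, I x -> I (r * x)).

Definition ideal_span (D : idomainType) (s : seq D) : D -> Prop :=
  fun x => exists c : 'I_(size s) -> D, x = \sum_(i < size s) c i * s`_i.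

Definition fg_ideal (D : idomainType) (J : D -> Prop) : Prop :=
  exists s : seq D, forall x, J x <-> ideal_span s x.

Definition frac_inv (D : idomainType) (A : {fraction D} -> Prop) : {fraction D} -> Prop :=
  fun a => forall x, A x -> exists d : D, a * x = tof d.

Definition vclos (D : idomainType) (I : D -> Prop) : {fraction D} -> Prop :=
  frac_inv (frac_inv (fun x => exists i, I i /\ x = tof i)).

Definition GV (D : idomainType) (J : D -> Prop) : Prop :=
  fg_ideal J /\ (forall a, vclos J a <-> exists d : D, a = tof d).

Section Mods.
Variables (D : idomainType) (V : lmodType {fraction D}).

Definition Dsubmod (N : V -> Prop) : Prop :=
  N 0 /\ (forall x y, N x -> N y -> N (x + y)) /\ (forall (d : D) x, N x -> N (tof d *: x)).

Definition subsetV (A B : V -> Prop) : Prop := forall x, A x -> B x.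
Definition eqV (A B : V -> Prop) : Prop := forall x, A x <-> B x.

Definition Dspan (gs : seq V) : V -> Prop :=
  fun x => exists c : 'I_(size gs) -> D, x = \sum_(i < size gs) tof (c i) *: gs`_i.

Definition fg_submod_of (M F : V -> Prop) : Prop :=
  exists gs : seq V, (forall i, (i < size gs)%N -> M gs`_i) /\ eqV F (Dspan gs).

(* image of N (x)_D K in V: elements x with d x in N for some nonzero d *)
Definition tensK (N : V -> Prop) : V -> Prop :=
  fun x => exists d : D, d != 0 /\ N (tof d *: x).

Definition wclos (N : V -> Prop) : V -> Prop :=
  fun x => tensK N x /\ exists J : D -> Prop, GV J /\ forall j, J j -> N (tof j *: x).

Definition w_module (N : V -> Prop) : Prop := eqV (wclos N) N.

Definition Sw_finite (S : D -> Prop) (M N : V -> Prop) : Prop :=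
  exists s : D, S s /\ exists F : V -> Prop, fg_submod_of M F /\
    subsetV (fun x => exists y, N y /\ x = tof s *: y) (wclos F) /\
    subsetV (wclos F) (wclos N).

Definition S_SM_module (S : D -> Prop) (M : V -> Prop) : Prop :=
  w_module M /\
  forall L : V -> Prop, Dsubmod L -> subsetV L M -> eqV (wclos L) L -> Sw_finite S M L.

(* localization N_m = {y / s | y in N, s notin m}, computed inside V *)
Definition loc (m : D -> Prop) (N : V -> Prop) : V -> Prop :=
  fun x => exists s : D, ~ m s /\ N (tof s *: x).

Definition locring (m : D -> Prop) : {fraction D} -> Prop :=
  fun a => exists d s : D, ~ m s /\ a = tof d / tof s.

Definition Dm_submod (m : D -> Prop) (N : V -> Prop) : Prop :=
  N 0 /\ (forall x y, N x -> N y -> N (x + y)) /\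
  (forall a x, locring m a -> N x -> N (a *: x)).

Definition Dm_fg (m : D -> Prop) (N : V -> Prop) : Prop :=
  exists gs : seq V, forall x, N x <->
    exists c : 'I_(size gs) -> {fraction D},
      (forall i, locring m (c i)) /\ x = \sum_(i < size gs) c i *: gs`_i.

Definition Noetherian_loc (m : D -> Prop) (M : V -> Prop) : Prop :=
  forall N : V -> Prop, Dm_submod m N -> subsetV N (loc m M) -> Dm_fg m N.

Definition colon (M L' : V -> Prop) (r : D) : V -> Prop :=
  fun x => M x /\ L' (tof r *: x).
End Mods.

(* w-ideals: ideals I of D with I_w = I, computed in K viewed as a K-vector space *)
Definition idealK (D : idomainType) (I : D -> Prop) : {fraction D}^o -> Prop :=
  fun x => exists i, I i /\ x = tof i.

Definition w_ideal (D : idomainType) (I : D -> Prop) : Prop :=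
  is_ideal I /\ w_module (idealK I).

Definition proper_ideal (D : idomainType) (I : D -> Prop) : Prop := exists d : D, ~ I d.

Definition max_w_ideal (D : idomainType) (m : D -> Prop) : Prop :=
  w_ideal m /\ proper_ideal m /\
  forall I : D -> Prop, w_ideal I -> proper_ideal I ->
    (forall x, m x -> I x) -> forall x, I x -> m x.

From HB Require Import structures.
From mathcomp Require Import all_boot all_order all_algebra.
From mathcomp Require Import ring.
From Stdlib Require Import Classical.
Set Implicit Arguments. Unset Strict Implicit.
Import GRing.Theory.
Local Open Scope ring_scope.

(* Everything rests on the inclusions N ⊆ N_w ⊆ N_m.  An element of N_w is
   carried into N by some J in GV(D), and J cannot lie inside the w-ideal m
   (unless D is a field and m = 0); moreover D \ m is multiplicatively closed,
   because a colon ideal (m : a) of the maximal w-ideal m is again a w-ideal.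
   (1) => (2): a D_m-submodule N of M_m is the localisation of the w-submodule
   N ∩ M, and the generators of a finitely generated F with s(N ∩ M) ⊆ F_w
   generate N over D_m.  For L finitely generated, apply (1) to L_m ∩ M: this
   gives s(L_m ∩ M) ⊆ F_w with F finitely generated inside L_m, and clearing
   the denominators of F by t ∉ m yields ts((L_w)_m ∩ M) ⊆ L_w.
   (2) => (1): for a w-submodule L, the denominators of finitely many
   D_m-generators of L_m are cleared by one t ∉ m, giving a finitely generated
   F ⊆ L with L ⊆ F_m; the colon condition for F then gives s L ⊆ F_w ⊆ L_w. *)

Section Fraction.
Variable D : idomainType.
Local Notation K := {fraction D}.

Lemma tofM (a b : D) : tof (a * b) = tof a * tof b.
Proof. exact: rmorphM. Qed.

Lemma tofD (a b : D) : tof (a + b) = tof a + tof b.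
Proof. exact: rmorphD. Qed.

Lemma tof1 : tof (1 : D) = 1.
Proof. exact: rmorph1. Qed.

Lemma tof0 : tof (0 : D) = 0.
Proof. exact: rmorph0. Qed.

Lemma tof_inj (a b : D) : tof a = tof b -> a = b.
Proof. by move=> h; apply/eqP; rewrite -(tofrac_eq a b); apply/eqP. Qed.

Lemma tof_neq0 (a : D) : a != 0 -> tof a != 0.
Proof. by move=> h; rewrite /tof tofrac_eq0. Qed.

Lemma scale_tof (a b : D) : tof a *: (tof b : K^o) = tof (a * b).
Proof. by rewrite tofM. Qed.

Lemma idealKE (I : D -> Prop) (x : D) : idealK I (tof x) <-> I x.
Proof. by split; [case=> i [Ii /tof_inj ->] | exists x]. Qed.

Lemma GV_full : GV (fun _ : D => True).
Proof.
split.
  exists [:: 1] => x; split => // _.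
  by exists (fun _ => x); rewrite big_ord1 /= mulr1.
move=> a; split.
  move=> /(_ 1) []; last by move=> d; rewrite mulr1 => ->; exists d.
  by move=> y [i [_ ->]]; exists i; rewrite mul1r.
move=> [d ->] x Hx.
have [e He] := Hx (tof d) (ex_intro _ d (conj I erefl)).
by exists e; rewrite mulrC.
Qed.

Lemma GV_frac_inv_sub (J : D -> Prop) (k : K) :
  GV J -> (forall j, J j -> exists d, tof j * k = tof d) -> exists e, k = tof e.
Proof.
move=> [_ GVJ] Jk.
have := (GVJ (tof 1)).2 (ex_intro _ 1 erefl) k.
case; last by move=> e; rewrite tof1 mul1r => ->; exists e.
by move=> _ [j [Jj ->]]; rewrite mulrC; apply: Jk.
Qed.

End Fraction.

Section Modules.
Variables (D : idomainType) (V : lmodType {fraction D}).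

Definition meetV (A B : V -> Prop) : V -> Prop := fun x => A x /\ B x.

Lemma sub_wclos (N : V -> Prop) : Dsubmod N -> subsetV N (wclos N).
Proof.
move=> [_ [_ NZ]] x Nx; split.
  by exists 1; split; [exact: oner_neq0 | rewrite tof1 scale1r].
by exists (fun _ => True); split; [exact: GV_full | move=> j _; apply: NZ].
Qed.

Lemma wclosS (A B : V -> Prop) : subsetV A B -> subsetV (wclos A) (wclos B).
Proof.
move=> AB x [[d [dn0 Adx]] [J [GVJ HJ]]]; split.
  by exists d; split => //; apply: AB.
by exists J; split => // j Jj; apply/AB/HJ.
Qed.

Lemma wclos_scale (A B : V -> Prop) (t : D) :
  (forall z, A z -> B (tof t *: z)) -> forall y, wclos A y -> wclos B (tof t *: y).
Proof.
move=> AB y [[d [dn0 Ady]] [J [GVJ HJ]]]; split.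
  by exists d; split => //; rewrite scalerA mulrC -scalerA; apply: AB.
by exists J; split => // j Jj; rewrite scalerA mulrC -scalerA; apply/AB/HJ.
Qed.

Lemma eqV_Dsubmod (A B : V -> Prop) : eqV A B -> Dsubmod B -> Dsubmod A.
Proof.
move=> e [B0 [BD BZ]]; split; first exact/e.
split; first by move=> x y /e Ax /e Ay; apply/e; apply: BD.
by move=> d x /e Bx; apply/e; apply: BZ.
Qed.

Lemma Dsubmod_meet (A B : V -> Prop) : Dsubmod A -> Dsubmod B -> Dsubmod (meetV A B).
Proof.
move=> [A0 [AD AZ]] [B0 [BD BZ]]; split; first by [].
split; first by move=> x y [Ax Bx] [Ay By]; split; [apply: AD | apply: BD].
by move=> d x [Ax Bx]; split; [apply: AZ | apply: BZ].
Qed.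

Lemma Dsubmod_scale_preim (N : V -> Prop) (t : D) :
  Dsubmod N -> Dsubmod (fun x => N (tof t *: x)).
Proof.
move=> [N0 [ND NZ]]; split; first by rewrite scaler0.
split; first by move=> x y Nx Ny; rewrite scalerDr; apply: ND.
by move=> d x Nx; rewrite scalerA mulrC -scalerA; apply: NZ.
Qed.

Lemma Dsubmod_sum (N : V -> Prop) n (c : 'I_n -> D) (g : 'I_n -> V) :
  Dsubmod N -> (forall i, N (g i)) -> N (\sum_(i < n) tof (c i) *: g i).
Proof. by move=> [N0 [ND NZ]] Hg; apply: (big_ind N) => // i _; apply: NZ. Qed.

Lemma Dm_submod_sum (m : D -> Prop) (N : V -> Prop) n (c : 'I_n -> {fraction D})
    (g : 'I_n -> V) :
  Dm_submod m N -> (forall i, locring m (c i)) -> (forall i, N (g i)) ->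
  N (\sum_(i < n) c i *: g i).
Proof. by move=> [N0 [ND NZ]] Hc Hg; apply: (big_ind N) => // i _; apply: NZ. Qed.

Lemma Dspan_mem (gs : seq V) (i : 'I_(size gs)) : Dspan gs gs`_i.
Proof.
exists (fun j => if j == i then 1 else 0).
rewrite (bigD1 i) //= eqxx tof1 scale1r big1 ?addr0 // => j /negbTE ->.
by rewrite tof0 scale0r.
Qed.

Lemma Dspan_submod (gs : seq V) : Dsubmod (Dspan gs).
Proof.
split; first by exists (fun _ => 0); rewrite big1 // => i _; rewrite tof0 scale0r.
split.
  move=> x y [c ->] [c' ->]; exists (fun i => c i + c' i).
  by rewrite -big_split /=; apply: eq_bigr => i _; rewrite tofD scalerDl.
move=> d x [c ->]; exists (fun i => d * c i).
by rewrite scaler_sumr; apply: eq_bigr => i _; rewrite scalerA tofM.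
Qed.

Lemma Dspan_sub (N : V -> Prop) (gs : seq V) :
  Dsubmod N -> (forall i, (i < size gs)%N -> N gs`_i) -> subsetV (Dspan gs) N.
Proof. by move=> HN Hgs x [c ->]; apply: Dsubmod_sum => // i; apply: Hgs. Qed.

Lemma fg_submod_Dsubmod (M F : V -> Prop) : fg_submod_of M F -> Dsubmod F.
Proof. by move=> [gs [_ eF]]; apply: eqV_Dsubmod eF (Dspan_submod gs). Qed.

Lemma fg_submod_of_sub (M N F : V -> Prop) :
  fg_submod_of M F -> subsetV F N -> fg_submod_of N F.
Proof.
move=> [gs [_ eF]] FN; exists gs; split => // i hi.
exact/FN/eF/(Dspan_mem (Ordinal hi)).
Qed.

End Modules.

Section WIdeals.
Variable D : idomainType.

Lemma idealK_submod (I : D -> Prop) : is_ideal I -> Dsubmod (idealK I).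
Proof.
move=> [I0 [ID IM]]; split; first by exists 0; rewrite tof0.
split.
  by move=> _ _ [i [Ii ->]] [j [Ij ->]]; exists (i + j); rewrite tofD; split => //; apply: ID.
by move=> d _ [i [Ii ->]]; exists (d * i); split; [apply: IM | rewrite tofM].
Qed.

Lemma w_ideal_colon (I : D -> Prop) (a : D) : w_ideal I -> w_ideal (fun x => I (a * x)).
Proof.
move=> [[I0 [ID IM]] wI].
have Ia : is_ideal (fun x => I (a * x)).
  split; first by rewrite mulr0.
  split; first by move=> x y Ix Iy; rewrite mulrDr; apply: ID.
  by move=> r x Ix; rewrite mulrCA; apply: IM.
split => // x; split; last exact: sub_wclos (idealK_submod Ia) x.
move=> [[d [dn0 Hd]] [J [GVJ HJ]]].
have [x0 ex] : exists x0, x = tof x0.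
  by apply: (GV_frac_inv_sub GVJ) => j /HJ [i [_ e]]; exists i.
move: Hd HJ; rewrite ex scale_tof => /idealKE Hd HJ.
apply/idealKE/(idealKE I)/wI; split.
  by exists d; split => //; rewrite scale_tof; apply/idealKE; rewrite mulrCA.
exists J; split => // j /HJ; rewrite scale_tof => /idealKE Hj.
by rewrite scale_tof; apply/idealKE; rewrite mulrCA.
Qed.

End WIdeals.

Section MaxWIdeal.
Variables (D : idomainType) (m : D -> Prop).
Hypothesis Hm : max_w_ideal m.

Lemma m_mull r x : m x -> m (r * x).
Proof. by case: Hm => [[[_ [_ IM]] _] _]; apply: IM. Qed.

Lemma m_not1 : ~ m 1.
Proof. by case: Hm => _ [[d nd] _] m1; apply: nd; rewrite -(mulr1 d); apply: m_mull. Qed.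

Lemma tof_notm s : ~ m s -> tof s != 0.
Proof. by case: Hm => [[[m0 _] _] _] ms; apply: tof_neq0; apply/eqP => s0; apply: ms; rewrite s0. Qed.

Lemma locring_tof d : locring m (tof d).
Proof. by exists d, 1; split; [exact: m_not1 | rewrite tof1 divr1]. Qed.

Lemma notm_mul a b : ~ m a -> ~ m b -> ~ m (a * b).
Proof.
move=> ma mb mab; apply: mb.
have [wm [_ maxm]] := Hm.
apply: (maxm _ (w_ideal_colon a wm) _ _ b mab); first by exists 1; rewrite mulr1.
by move=> x; apply: m_mull.
Qed.

Lemma GV_sub_max_w_ideal (J : D -> Prop) :
  GV J -> (forall j, J j -> m j) -> forall d, d != 0 -> ~ m d.
Proof.
move=> GVJ Jm d dn0 md; apply: m_not1.
case: (classic (exists j, J j /\ j != 0)) => [[j [Jj jn0]] | J0].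
  have [[_ wm] _] := Hm.
  apply/(idealKE m)/wm; split.
    by exists j; split => //; rewrite scale_tof mulr1; apply/idealKE/Jm.
  by exists J; split => // j' Jj'; rewrite scale_tof mulr1; apply/idealKE/Jm.
(* only a field admits the zero ideal in GV(D) *)
have [e he] : exists e, (tof d)^-1 = tof e.
  apply: (GV_frac_inv_sub GVJ) => j Jj; exists 0.
  have -> : j = 0 by apply: NNPP => /eqP jn0; apply: J0; exists j.
  by rewrite tof0 mul0r.
have -> : 1 = e * d by apply: tof_inj; rewrite tof1 tofM -he mulVf // tof_neq0.
exact: m_mull.
Qed.

Variable V : lmodType {fraction D}.

Lemma sub_loc (N : V -> Prop) : subsetV N (loc m N).
Proof. by move=> x Nx; exists 1; split; [exact: m_not1 | rewrite tof1 scale1r]. Qed.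

Lemma locS (A B : V -> Prop) : subsetV A B -> subsetV (loc m A) (loc m B).
Proof. by move=> AB x [s [ms As]]; exists s; split => //; apply: AB. Qed.

Lemma loc_loc (N : V -> Prop) : subsetV (loc m (loc m N)) (loc m N).
Proof.
move=> x [s [ms [t [mt Nt]]]]; exists (t * s); split; first exact: notm_mul.
by rewrite tofM -scalerA.
Qed.

Lemma loc_Dm_submod (N : V -> Prop) : Dsubmod N -> Dm_submod m (loc m N).
Proof.
move=> [N0 [ND NZ]]; split; first by exists 1; split; [exact: m_not1 | rewrite scaler0].
split.
  move=> x y [s [ms Nsx]] [t [mt Nty]]; exists (s * t); split; first exact: notm_mul.
  rewrite scalerDr; apply: ND.
    by rewrite mulrC tofM -scalerA; apply: NZ.
  by rewrite tofM -scalerA; apply: NZ.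
move=> _ x [d [s [ms ->]]] [t [mt Ntx]]; exists (s * t); split; first exact: notm_mul.
rewrite scalerA; have -> : tof (s * t) * (tof d / tof s) = tof d * tof t.
  by rewrite tofM; field; apply: tof_notm.
by rewrite -scalerA; apply: NZ.
Qed.

Lemma Dm_submod_Dsubmod (N : V -> Prop) : Dm_submod m N -> Dsubmod N.
Proof. by move=> [N0 [ND NZ]]; split => //; split => // d x; apply/NZ/locring_tof. Qed.

Lemma Dm_submod_loc (N : V -> Prop) : Dm_submod m N -> subsetV (loc m N) N.
Proof.
move=> [_ [_ NZ]] x [s [ms Nsx]].
have <- : (tof s)^-1 *: (tof s *: x) = x by rewrite scalerA mulVf ?scale1r // tof_notm.
by apply: NZ Nsx; exists 1, s; split => //; rewrite tof1 mul1r.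
Qed.

Lemma wclos_sub_loc (N : V -> Prop) : subsetV (wclos N) (loc m N).
Proof.
move=> x [[d [dn0 Ndx]] [J [GVJ HJ]]].
case: (classic (exists j, J j /\ ~ m j)) => [[j [Jj mj]] | Jm].
  by exists j; split => //; apply: HJ.
exists d; split => //; apply: (GV_sub_max_w_ideal GVJ) => // j Jj.
by apply: NNPP => mj; apply: Jm; exists j.
Qed.

Lemma loc_DspanE (gs : seq V) x :
  loc m (Dspan gs) x <->
  exists c : 'I_(size gs) -> {fraction D},
    (forall i, locring m (c i)) /\ x = \sum_(i < size gs) c i *: gs`_i.
Proof.
split.
  move=> [s [ms [c e]]]; exists (fun i => tof (c i) / tof s); split.
    by move=> i; exists (c i), s.
  rewrite -[LHS]scale1r -(mulVf (tof_notm ms)) -scalerA e scaler_sumr.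
  by apply: eq_bigr => i _; rewrite scalerA mulrC.
move=> [c [Hc ->]]; apply: Dm_submod_sum (loc_Dm_submod (Dspan_submod gs)) Hc _ => i.
exact/sub_loc/Dspan_mem.
Qed.

Lemma Dm_fgP (N : V -> Prop) : Dm_fg m N <-> exists gs, eqV N (loc m (Dspan gs)).
Proof.
by split=> [] [gs e]; exists gs => x; split => [/e/loc_DspanE | /loc_DspanE/e].
Qed.

Lemma loc_Dspan_sub (N : V -> Prop) (gs : seq V) :
  Dm_submod m N -> (forall i, (i < size gs)%N -> N gs`_i) ->
  subsetV (loc m (Dspan gs)) N.
Proof.
move=> HN Hgs x /loc_DspanE [c [Hc ->]].
by apply: Dm_submod_sum HN Hc _ => i; apply: Hgs.
Qed.

Lemma loc_common_denominator (N : V -> Prop) (gs : seq V) :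
  Dsubmod N -> (forall i, (i < size gs)%N -> loc m N gs`_i) ->
  exists t, ~ m t /\ forall i, (i < size gs)%N -> N (tof t *: gs`_i).
Proof.
move=> [_ [_ NZ]]; elim: gs => [|g gs IH] Hgs.
  by exists 1; split; [exact: m_not1 | ].
have [t [mt Ht]] := IH (fun i => Hgs i.+1).
have [u [mu Nu]] := Hgs 0%N erefl.
exists (u * t); split; first exact: notm_mul.
case=> [|i] hi /=.
  by rewrite mulrC tofM -scalerA; apply: NZ.
by rewrite tofM -scalerA; apply/NZ/Ht.
Qed.

Lemma fg_sub_loc_scale (L F : V -> Prop) :
  Dsubmod L -> fg_submod_of (loc m L) F ->
  exists t, ~ m t /\ forall z, F z -> L (tof t *: z).
Proof.
move=> HL [gs [gsL eF]].
have [t [mt Ht]] := loc_common_denominator HL gsL.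
by exists t; split => // z /eF; apply: Dspan_sub (Dsubmod_scale_preim t HL) Ht z.
Qed.

Lemma loc_fg_sub (L : V -> Prop) (gs : seq V) :
  Dsubmod L -> eqV (loc m L) (loc m (Dspan gs)) ->
  exists F, fg_submod_of L F /\ subsetV F L /\ subsetV L (loc m F).
Proof.
move=> HL eL.
have [t [mt Ht]] : exists t, ~ m t /\ forall z, Dspan gs z -> L (tof t *: z).
  apply: fg_sub_loc_scale => //; exists gs; split => [i hi | x]; last by split.
  exact/eL/sub_loc/(Dspan_mem (Ordinal hi)).
pose fs := map (fun y => tof t *: y) gs.
have fsE i : (i < size gs)%N -> fs`_i = tof t *: gs`_i by move=> hi; rewrite (nth_map 0).
have fsL i : (i < size fs)%N -> L fs`_i.
  by rewrite size_map => hi; rewrite fsE //; apply/Ht/(Dspan_mem (Ordinal hi)).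
exists (Dspan fs); split; first by exists fs; split => // x; split.
split; first exact: Dspan_sub.
move=> y /sub_loc/eL; apply: loc_Dspan_sub (loc_Dm_submod (Dspan_submod fs)) _ y.
move=> i hi; exists t; split => //; rewrite -fsE //.
by apply: (Dspan_mem (Ordinal _)); rewrite size_map.
Qed.

Variable M : V -> Prop.
Hypotheses (HM : Dsubmod M) (wM : w_module M).

Lemma meet_w_closed (N : V -> Prop) :
  Dm_submod m N -> eqV (wclos (meetV N M)) (meetV N M).
Proof.
move=> HN x; split; last exact: sub_wclos (Dsubmod_meet (Dm_submod_Dsubmod HN) HM) x.
move=> Hx; split.
  by apply: (Dm_submod_loc HN); apply: locS (wclos_sub_loc Hx) => y [].
by apply/wM; apply: wclosS Hx => y [].
Qed.

Lemma SM_Noetherian_loc : S_SM_module (fun s => ~ m s) M -> Noetherian_loc m M.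
Proof.
move=> [_ SM] N HN NM; apply/Dm_fgP.
have HND := Dm_submod_Dsubmod HN.
have [_ [_ NZ]] := HND.
have HL := Dsubmod_meet HND HM.
have [s [ms [F [fgF [sLF FL]]]]] := SM _ HL (fun x => @proj2 _ _) (meet_w_closed HN).
have [gs [_ eF]] := fgF.
have gsL i : (i < size gs)%N -> meetV N M gs`_i.
  move=> hi; apply/(meet_w_closed HN)/FL/(sub_wclos (fg_submod_Dsubmod fgF)).
  exact/eF/(Dspan_mem (Ordinal hi)).
exists gs => x; split; last by apply: loc_Dspan_sub HN _ x => i /gsL [].
move=> Nx; have [t [mt Mtx]] := NM x Nx.
have Ltx : meetV N M (tof t *: x) by split => //; apply: NZ.
have [u [mu Fu]] := wclos_sub_loc (sLF _ (ex_intro _ _ (conj Ltx erefl))).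
exists (u * (s * t)); split; first by do 2?apply: notm_mul.
by apply/eF; rewrite !tofM -!scalerA.
Qed.

Lemma SM_loc_colon : S_SM_module (fun s => ~ m s) M ->
  forall L : V -> Prop, fg_submod_of M L ->
    exists s : D, ~ m s /\
      forall x, (loc m (wclos L) x /\ M x) <-> colon M (wclos L) s x.
Proof.
move=> [_ SM] L fgL.
have HL := fg_submod_Dsubmod fgL.
have HLm := loc_Dm_submod HL.
have HL2 := Dsubmod_meet (Dm_submod_Dsubmod HLm) HM.
have [s [ms [F [fgF [sL2F FL2]]]]] := SM _ HL2 (fun x => @proj2 _ _) (meet_w_closed HLm).
have FD := fg_submod_Dsubmod fgF.
have [t [mt tFL]] : exists t, ~ m t /\ forall z, F z -> L (tof t *: z).
  apply: (fg_sub_loc_scale HL); apply: (fg_submod_of_sub fgF) => z Fz.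
  by have [] := (meet_w_closed HLm z).1 (FL2 z (sub_wclos FD Fz)).
exists (t * s); split; first exact: notm_mul.
move=> x; split; last first.
  by move=> [Mx Hx]; split => //; exists (t * s); split => //; apply: notm_mul.
move=> [Lwx Mx]; split => //.
have L2x : meetV (loc m L) M x.
  by split => //; apply/loc_loc/(locS (wclos_sub_loc (N:=L)) Lwx).
by rewrite tofM -scalerA; apply: wclos_scale tFL _ (sL2F _ (ex_intro _ x (conj L2x erefl))).
Qed.

Lemma Noetherian_loc_SM : Noetherian_loc m M ->
  (forall L : V -> Prop, fg_submod_of M L -> (exists x, L x /\ x <> 0) ->
    exists s : D, ~ m s /\
      forall x, (loc m (wclos L) x /\ M x) <-> colon M (wclos L) s x) ->
  S_SM_module (fun s => ~ m s) M.
Proof.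
move=> Noeth Hcolon; split => // L HL LM _.
have /Dm_fgP [gs eL] := Noeth _ (loc_Dm_submod HL) (locS LM).
have [F [fgF [FL LF]]] := loc_fg_sub HL eL.
have FD := fg_submod_Dsubmod fgF.
have fgMF : fg_submod_of M F by apply: fg_submod_of_sub fgF _ => z /FL /LM.
case: (classic (exists x, F x /\ x <> 0)) => [nzF | zF].
  have [s [ms Hs]] := Hcolon F fgMF nzF.
  exists s; split => //; exists F; split => //; split; last exact: wclosS.
  move=> _ [y [Ly ->]]; apply: (proj2 ((Hs y).1 _)); split; last exact: LM.
  exact: locS (sub_wclos FD) _ (LF y Ly).
exists 1; split; first exact: m_not1.
exists F; split => //; split; last exact: wclosS.
move=> _ [y [Ly ->]].
have [u [mu Fuy]] := LF y Ly.
have y0 : y = 0.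
  have : tof u *: y = 0 by apply: NNPP => ne; apply: zF; exists (tof u *: y).
  by move/eqP; rewrite scaler_eq0 (negbTE (tof_notm mu)) => /eqP.
by rewrite y0 scaler0; apply: (sub_wclos FD); case: FD.
Qed.

End MaxWIdeal.

Theorem proposition3p3 (D : idomainType) (V : lmodType {fraction D})
    (m : D -> Prop) (M : V -> Prop) :
  max_w_ideal m -> Dsubmod M -> w_module M ->
  (S_SM_module (fun s => ~ m s) M <->
   (Noetherian_loc m M /\
    forall L : V -> Prop, fg_submod_of M L -> (exists x, L x /\ x <> 0) ->
      exists s : D, ~ m s /\
        forall x, (loc m (wclos L) x /\ M x) <-> colon M (wclos L) s x)).
Proof.
move=> Hm HM wM; split.
  move=> SM; split; first exact: SM_Noetherian_loc.
  by move=> L fgL _; apply: SM_loc_colon.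
by case=> Noeth Hcolon; apply: Noetherian_loc_SM.
Qed.
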